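(* For every infinite $\lambda$-term $M$: $\lambda.M$ is derivable in $\mathbf{Reg}^{+}$ if and only if $\lambda.M$ is derivable in $\mathbf{Reg}^{+}_0$.
   Context: Infinite $\lambda$-terms are possibly infinite terms built from variables, abstractions and applications, modulo $\alpha$-equivalence. A prefixed term is $\lambda x_1\ldots x_n.M$ ($n\ge0$, distinct variables, separate abstraction prefix; $\lambda.M$ for empty prefix) with the free variables of $M$ among the $x_i$. Proof system $\mathbf{Reg}^{+}$ (finite natural-deduction trees of prefixed terms): axiom (nlvar) $\lambda\vec{x}y.y$; $(\lambda)$: from $\lambda\vec{x}y.M_0$ infer $\lambda\vec{x}.\lambda y.M_0$; $(@)$: from $\lambda\vec{x}.M_0$ and $\lambda\vec{x}.M_1$ infer $\lambda\vec{x}.(M_0\,M_1)$; $(\mathrm{del}^{+})$: from $\lambda x_1\ldots x_{n-1}.M$ infer $\lambda x_1\ldots x_n.M$ if $x_n$ is not free in $M$; (FIX,$u$): if $\mathcal{D}_0$ is a derivation of depth $\ge1$ of $\lambda\vec{x}.M$ possibly with open assumption leaves $[\lambda\vec{x}.M]^u$, infer $\lambda\vec{x}.M$, discharging them. $\mathbf{Reg}^{+}_0$: same axioms and rules, but each instance of (FIX,$u$) must additionally satisfy: every $\lambda\vec{y}.N$ on a thread in $\mathcal{D}_0$ from an open marked assumption $(\lambda\vec{x}.M)^u$ downwards has $|\vec{y}|\ge|\vec{x}|$. A prefixed term is derivable in a system if there is a finite derivation of it in which every marked assumption is discharged by some instance of (FIX). *)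

From mathcomp Require Import all_boot.
Set Implicit Arguments. Unset Strict Implicit. Unset Printing Implicit Defensive.

(** * Infinite lambda-terms, modulo alpha: coinductive de Bruijn terms.
    Equality of infinite terms is bisimilarity [bisim]. *)
CoInductive term : Type :=
| Var : nat -> term
| Lam : term -> term
| App : term -> term -> term.

CoInductive bisim : term -> term -> Prop :=
| bisim_Var k : bisim (Var k) (Var k)
| bisim_Lam t t' : bisim t t' -> bisim (Lam t) (Lam t')
| bisim_App t u t' u' : bisim t t' -> bisim u u' -> bisim (App t u) (App t' u').

CoInductive wsc : nat -> term -> Prop :=
| wsc_Var n k : k < n -> wsc n (Var k)
| wsc_Lam n t : wsc n.+1 t -> wsc n (Lam t)
| wsc_App n t u : wsc n t -> wsc n u -> wsc n (App t u).

CoFixpoint shift (c : nat) (t : term) : term :=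
  match t with
  | Var k => Var (if k < c then k else k.+1)
  | Lam t' => Lam (shift c.+1 t')
  | App t1 t2 => App (shift c t1) (shift c t2)
  end.

(** A prefixed term  \x1...xn.M  is the pair (n, M), with M a de Bruijn term
    whose free indices are < n (x_n is index 0, x_1 is index n-1). *)
Definition judg := (nat * term)%type.
Definition jeq (j j' : judg) : Prop := j.1 = j'.1 /\ bisim j.2 j'.2.

Inductive deriv : Type :=
| DAssum (u : nat) (j : judg)
| DNlvar (n : nat)
| DLam (d : deriv)
| DApp (d0 d1 : deriv)
| DDel (d : deriv)
| DFix (u : nat) (j : judg) (d : deriv).

Fixpoint concl (d : deriv) : judg :=
  match d with
  | DAssum _ j => j
  | DNlvar n => (n.+1, Var 0)
  | DLam d' => ((concl d').1.-1, Lam (concl d').2)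
  | DApp d0 d1 => ((concl d0).1, App (concl d0).2 (concl d1).2)
  | DDel d' => ((concl d').1.+1, shift 0 (concl d').2)
  | DFix _ j _ => j
  end.

Fixpoint depth (d : deriv) : nat :=
  match d with
  | DAssum _ _ | DNlvar _ => 0
  | DLam d' | DDel d' | DFix _ _ d' => (depth d').+1
  | DApp d0 d1 => (maxn (depth d0) (depth d1)).+1
  end.

Fixpoint open_leaf (u : nat) (j : judg) (d : deriv) : Prop :=
  match d with
  | DAssum v j' => v = u /\ j = j'
  | DNlvar _ => False
  | DLam d' | DDel d' => open_leaf u j d'
  | DApp d0 d1 => open_leaf u j d0 \/ open_leaf u j d1
  | DFix v _ d' => v <> u /\ open_leaf u j d'
  end.

(** Reg+_0 side condition: every node on a thread from an open u-assumption
    of [d] down to the root of [d] has prefix length >= n.  A node is on such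
    a thread iff some u-leaf is open in the subderivation rooted at it (and
    no (FIX,u) between it and the root of [d] discharges that leaf). *)
Fixpoint thread_ok (u n : nat) (d : deriv) : Prop :=
  ((exists j, open_leaf u j d) -> n <= (concl d).1) /\
  match d with
  | DAssum _ _ | DNlvar _ => True
  | DLam d' | DDel d' => thread_ok u n d'
  | DApp d0 d1 => thread_ok u n d0 /\ thread_ok u n d1
  | DFix v _ d' => v <> u -> thread_ok u n d'
  end.

(** Local correctness of every rule instance; [sys0 = true] is Reg+_0,
    [sys0 = false] is Reg+.  Every node must be a prefixed term. *)
Fixpoint valid (sys0 : bool) (d : deriv) : Prop :=
  wsc (concl d).1 (concl d).2 /\
  match d with
  | DAssum _ _ => True
  | DNlvar _ => True
  | DLam d' => valid sys0 d' /\ 0 < (concl d').1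
  | DApp d0 d1 => valid sys0 d0 /\ valid sys0 d1 /\ (concl d0).1 = (concl d1).1
  | DDel d' => valid sys0 d'
  | DFix u j d' =>
      valid sys0 d' /\ 1 <= depth d' /\ jeq (concl d') j /\
      (forall j', open_leaf u j' d' -> jeq j' j) /\
      (sys0 -> thread_ok u j.1 d')
  end.

Definition derivable (sys0 : bool) (j : judg) : Prop :=
  exists d, valid sys0 d /\ (forall u j', ~ open_leaf u j' d) /\ jeq (concl d) j.

Definition derivable_Reg_plus (j : judg) := derivable false j.
Definition derivable_Reg_plus0 (j : judg) := derivable true j.

(** A Reg+ derivation is a finite tree whose assumption leaves point back
    to the (FIX) rules discharging them. Forgetting the (FIX) rules turns it
    into a finite graph whose vertices are axioms or instances of (λ), (@),
    (del+), labelled by prefixed terms. Unfolding this graph from its root, we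
    close a cycle back to an ancestor vertex v only when every vertex passed
    since v is labelled by a prefix at least as long as v's, and open a fresh
    (FIX,v) otherwise; the result satisfies the Reg+_0 side condition by
    construction. The unfolding is finite: on a path along which no cycle can
    be closed, a vertex of shortest prefix occurs only once, and it splits the
    path into two such paths avoiding it, so the path has fewer than 2^|G|
    vertices. *)
From mathcomp Require Import all_boot zify.
Set Implicit Arguments. Unset Strict Implicit. Unset Printing Implicit Defensive.

Definition term_frob (t : term) : term :=
  match t with Var k => Var k | Lam t => Lam t | App t u => App t u end.

Lemma term_frobE t : t = term_frob t.
Proof. by case: t. Qed.

Lemma bisim_refl t : bisim t t.
Proof. move: t; cofix CIH => -[k|t|t u]; constructor; exact: CIH. Qed.

Lemma bisim_sym t u : bisim t u -> bisim u t.
Proof. move: t u; cofix CIH => t u [k|{}t t' h|{}t {}u t' u' h h']; constructor; exact: CIH. Qed.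

Lemma bisim_trans t u v : bisim t u -> bisim u v -> bisim t v.
Proof.
move: t u v; cofix CIH => t u v htu huv.
by case: htu huv => [k|{}t t' h|{}t {}u t' u' h h'] huv; inversion huv; subst;
  constructor; apply: CIH; eassumption.
Qed.

Lemma wsc_bisim n t t' : bisim t t' -> wsc n t -> wsc n t'.
Proof.
move: n t t'; cofix CIH => n t t' htt ht.
by case: htt ht => [k|{}t t'' h|{}t u t'' u' h h'] ht; inversion ht; subst;
  constructor=> //; apply: CIH; eassumption.
Qed.

Lemma bisim_shift c t t' : bisim t t' -> bisim (shift c t) (shift c t').
Proof.
move: c t t'; cofix CIH => c t t' h.
rewrite (term_frobE (shift c t)) (term_frobE (shift c t')).
by case: h => [k|{}t t'' h|{}t u t'' u' h h'] /=; constructor; exact: CIH.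
Qed.

Lemma jeq_refl j : jeq j j.
Proof. by split; last exact: bisim_refl. Qed.

Lemma jeq_sym j j' : jeq j j' -> jeq j' j.
Proof. by case=> e h; split; [rewrite e | exact: bisim_sym]. Qed.

Lemma jeq_trans j j' j'' : jeq j j' -> jeq j' j'' -> jeq j j''.
Proof. by case=> e h [e' h']; split; [rewrite e | exact: bisim_trans h h']. Qed.

Lemma wsc_jeq j j' : jeq j j' -> wsc j.1 j.2 -> wsc j'.1 j'.2.
Proof. by case=> <-; apply: wsc_bisim. Qed.

Lemma jeq_Lam j j' : jeq j j' -> jeq (j.1.-1, Lam j.2) (j'.1.-1, Lam j'.2).
Proof. by case=> e h; split; [rewrite /= e | exact: bisim_Lam]. Qed.

Lemma jeq_App j0 j1 j0' j1' : jeq j0 j0' -> jeq j1 j1' ->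
  jeq (j0.1, App j0.2 j1.2) (j0'.1, App j0'.2 j1'.2).
Proof. by case=> e h [_ h']; split; [rewrite /= e | exact: bisim_App]. Qed.

Lemma jeq_Del j j' : jeq j j' -> jeq (j.1.+1, shift 0 j.2) (j'.1.+1, shift 0 j'.2).
Proof. by case=> e h; split; [rewrite /= e | exact: bisim_shift]. Qed.

Lemma valid_weaken d : valid true d -> valid false d.
Proof. by elim: d => /= [u j|n|d IH|d0 IH0 d1 IH1|d IH|u j d IH]; intuition. Qed.

Lemma derivable_Reg_plus_of_Reg_plus0 j : derivable_Reg_plus0 j -> derivable_Reg_plus j.
Proof. by case=> d [dvalid dclosed]; exists d; split=> //; apply: valid_weaken. Qed.

Inductive rule :=
| RLam (j : judg) (c : nat)
| RApp (j : judg) (c0 c1 : nat)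
| RDel (j : judg) (c : nat).

Inductive vertex := VAxiom (n : nat) | VRule (r : rule).

Definition graph := seq vertex.

Definition rule_concl (r : rule) : judg :=
  match r with RLam j _ | RApp j _ _ | RDel j _ => j end.

Definition vertex_label (x : vertex) : judg :=
  match x with VAxiom n => (n.+1, Var 0) | VRule r => rule_concl r end.

(* Vertices beyond [size G] read as the axiom vertex [VAxiom 0]. *)
Definition vertex_at (G : graph) (v : nat) : vertex := nth (VAxiom 0) G v.

Definition label (G : graph) (v : nat) : judg := vertex_label (vertex_at G v).

Definition rule_ok (G : graph) (r : rule) : Prop :=
  wsc (rule_concl r).1 (rule_concl r).2 /\
  match r with
  | RLam j c => 0 < (label G c).1 /\ jeq ((label G c).1.-1, Lam (label G c).2) j
  | RApp j c0 c1 => (label G c0).1 = (label G c1).1 /\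
                    jeq ((label G c0).1, App (label G c0).2 (label G c1).2) j
  | RDel j c => jeq ((label G c).1.+1, shift 0 (label G c).2) j
  end.

Definition vertex_ok (G : graph) (x : vertex) : Prop :=
  if x is VRule r then rule_ok G r else True.

Definition graph_ok (G : graph) : Prop := forall v, vertex_ok G (vertex_at G v).

Lemma wsc_label G v : graph_ok G -> wsc (label G v).1 (label G v).2.
Proof. by move/(_ v); rewrite /label; case: (vertex_at G v) => [n _|r []] //; constructor. Qed.

Definition apply_rule (r : rule) (sub : nat -> deriv) : deriv :=
  match r with
  | RLam _ c => DLam (sub c)
  | RApp _ c0 c1 => DApp (sub c0) (sub c1)
  | RDel _ c => DDel (sub c)
  end.

Section ApplyRule.

Variables (G : graph) (sub : nat -> deriv).
Hypothesis concl_sub : forall c, concl (sub c) = label G c.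

Lemma apply_rule_concl r : rule_ok G r -> jeq (concl (apply_rule r sub)) (rule_concl r).
Proof. by case: r => [j c|j c0 c1|j c] [_] /=; rewrite ?concl_sub // => -[]. Qed.

Lemma valid_apply_rule b r : rule_ok G r -> (forall c, valid b (sub c)) ->
  valid b (apply_rule r sub).
Proof.
move=> rok valid_sub; have := wsc_jeq (jeq_sym (apply_rule_concl rok)) rok.1.
by case: r rok => [j c|j c0 c1|j c] /= [_ h]; rewrite ?concl_sub; intuition.
Qed.

End ApplyRule.

Lemma open_leaf_apply_rule u j r sub :
  open_leaf u j (apply_rule r sub) -> exists c, open_leaf u j (sub c).
Proof. by case: r => [_ c|_ c0 c1|_ c] /=; [|case|]; eexists; eassumption. Qed.

Lemma thread_ok_apply_rule u n r sub :
  ((exists j, open_leaf u j (apply_rule r sub)) -> n <= (concl (apply_rule r sub)).1) ->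
  (forall c, thread_ok u n (sub c)) -> thread_ok u n (apply_rule r sub).
Proof. by case: r. Qed.

(* [flatten d env nx] lays out the vertices of [d] from index [nx] on and
   returns them with the vertex of the conclusion of [d]. An open assumption
   [u] points to vertex [env u]; (FIX,u) adds no vertex of its own but makes
   [u] point to the vertex [nx] of its premise. *)
Fixpoint flatten (d : deriv) (env : nat -> nat) (nx : nat) : graph * nat :=
  match d with
  | DAssum u _ => ([::], env u)
  | DNlvar n => ([:: VAxiom n], nx)
  | DLam b => let fb := flatten b env nx.+1 in (VRule (RLam (concl d) fb.2) :: fb.1, nx)
  | DApp b0 b1 =>
      let fb0 := flatten b0 env nx.+1 in
      let fb1 := flatten b1 env (nx.+1 + size fb0.1) in
      (VRule (RApp (concl d) fb0.2 fb1.2) :: fb0.1 ++ fb1.1, nx)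
  | DDel b => let fb := flatten b env nx.+1 in (VRule (RDel (concl d) fb.2) :: fb.1, nx)
  | DFix u _ b => flatten b (fun x => if x == u then nx else env x) nx
  end.

Lemma flatten_head d env nx : valid false d -> 0 < depth d ->
  exists x l, flatten d env nx = (x :: l, nx) /\ jeq (vertex_label x) (concl d).
Proof.
elim: d env nx => [u j|n|d _|d0 _ d1 _|d _|u j d IH] env nx //=;
  try by move=> _ _; do 2 eexists; split; [reflexivity | exact: jeq_refl].
case=> _ [dvalid [ddepth [dj _]]] _.
have [x [l [-> xd]]] := IH (fun y => if y == u then nx else env y) nx dvalid ddepth.
by exists x, l; split; last exact: jeq_trans xd dj.
Qed.

Definition placed (G : graph) (nx : nat) (l : graph) : Prop :=
  forall i, i < size l -> vertex_at G (nx + i) = nth (VAxiom 0) l i.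

Lemma placed_cons G nx x l : placed G nx (x :: l) -> vertex_at G nx = x /\ placed G nx.+1 l.
Proof.
move=> pl; split; first by rewrite -[nx]addn0 pl.
by move=> i il; rewrite addSnnS pl.
Qed.

Lemma placed_cat G nx l1 l2 : placed G nx (l1 ++ l2) ->
  placed G nx l1 /\ placed G (nx + size l1) l2.
Proof.
move=> pl; split=> i il.
  by rewrite pl ?nth_cat ?il // size_cat ltn_addr.
by rewrite -addnA pl ?nth_cat ?size_cat ?ltn_add2l // ltnNge leq_addr addKn.
Qed.

Lemma fix_env_open_leaf G env nx u j d : jeq (label G nx) j ->
  (forall j', open_leaf u j' d -> jeq j' j) ->
  (forall u' j', open_leaf u' j' (DFix u j d) -> jeq (label G (env u')) j') ->
  forall u' j', open_leaf u' j' d -> jeq (label G (if u' == u then nx else env u')) j'.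
Proof.
move=> nx_j u_j leaves u' j'; case: eqP => [-> /u_j j'j | u'u d_u'].
  exact: jeq_trans nx_j (jeq_sym j'j).
by apply: leaves; split=> // uu'; apply: u'u.
Qed.

Lemma flatten_correct d env nx G : valid false d -> placed G nx (flatten d env nx).1 ->
  (forall u j, open_leaf u j d -> jeq (label G (env u)) j) ->
  jeq (label G (flatten d env nx).2) (concl d) /\
  forall i, i < size (flatten d env nx).1 -> vertex_ok G (vertex_at G (nx + i)).
Proof.
elim: d env nx => [u j|n|d IH|d0 IH0 d1 IH1|d IH|u j d IH] env nx dvalid /= pl leaves.
- by split; [exact: leaves | case].
- have [at_nx _] := placed_cons pl.
  split; first by rewrite /label at_nx; exact: jeq_refl.
  by case=> [_|//]; rewrite addn0 at_nx.
- move/placed_cons: pl => [at_nx pl]; case: dvalid => dwsc [dvalid dpos].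
  have [dlabel dok] := IH env nx.+1 dvalid pl leaves.
  split; first by rewrite /label at_nx; exact: jeq_refl.
  case=> [_|i]; last by rewrite addnS -addSn; apply: dok.
  rewrite addn0 at_nx; split=> //=.
  by split; [rewrite dlabel.1 | exact: jeq_Lam].
- move/placed_cons: pl => [at_nx /placed_cat [pl0 pl1]].
  case: dvalid => dwsc [dvalid0 [dvalid1 dprefix]].
  have [dlabel0 dok0] := IH0 env nx.+1 dvalid0 pl0 (fun u j h => leaves u j (or_introl h)).
  have [dlabel1 dok1] := IH1 env _ dvalid1 pl1 (fun u j h => leaves u j (or_intror h)).
  split; first by rewrite /label at_nx; exact: jeq_refl.
  case=> [_|i]; rewrite ?size_cat.
    rewrite addn0 at_nx; split=> //=.
    by split; [rewrite dlabel0.1 dlabel1.1 | exact: jeq_App].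
  rewrite ltnS; case: (ltnP i (size (flatten d0 env nx.+1).1)) => [|i0 il].
    by move=> i0 _; rewrite addnS -addSn; apply: dok0.
  have := dok1 (i - size (flatten d0 env nx.+1).1).
  by rewrite ltn_subLR // -addnA subnKC // addnS -addSn; apply.
- move/placed_cons: pl => [at_nx pl]; case: dvalid => dwsc dvalid.
  have [dlabel dok] := IH env nx.+1 dvalid pl leaves.
  split; first by rewrite /label at_nx; exact: jeq_refl.
  case=> [_|i]; last by rewrite addnS -addSn; apply: dok.
  by rewrite addn0 at_nx; split=> //=; apply: jeq_Del.
- case: dvalid => _ [dvalid [ddepth [dj [dleaves _]]]].
  set env' := fun x => if x == u then nx else env x.
  have [x [l [flat_d xd]]] := flatten_head env' nx dvalid ddepth.
  have [at_nx _] : vertex_at G nx = x /\ placed G nx.+1 l.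
    by apply: placed_cons; move: pl; rewrite -/env' flat_d.
  have nx_j : jeq (label G nx) j by rewrite /label at_nx; exact: jeq_trans xd dj.
  have [dlabel dok] := IH env' nx dvalid pl (fix_env_open_leaf nx_j dleaves leaves).
  by split=> //; apply: jeq_trans dlabel dj.
Qed.

Definition prefix_ge (G : graph) (u : nat) (q : seq nat) : bool :=
  all (fun w => (label G u).1 <= (label G w).1) q.

(* Paths list the ancestors of the current vertex, nearest first. *)
Definition closes_cycle (G : graph) (p : seq nat) (v : nat) : bool :=
  (v \in p) && prefix_ge G v (take (index v p) p).

Fixpoint unfold (G : graph) (fuel : nat) (p : seq nat) (v : nat) : deriv :=
  match vertex_at G v with
  | VAxiom n => DNlvar n
  | VRule r =>
      if closes_cycle G p v then DAssum v (label G v)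
      else if fuel is fuel'.+1 then DFix v (label G v) (apply_rule r (unfold G fuel' (v :: p)))
      else DFix v (label G v) (DNlvar 0) (* junk: [valid_unfold] supplies enough fuel *)
  end.

Lemma concl_unfold G f p v : concl (unfold G f p v) = label G v.
Proof.
by case: f => [|f] /=; rewrite /label; case: (vertex_at G v) => //= r; case: ifP.
Qed.

Lemma prefix_ge_take_index G u v p :
  prefix_ge G u (take (index u (v :: p)) (v :: p)) -> (label G u).1 <= (label G v).1.
Proof. by case: (eqVneq v u) => [-> _ //|vu] /=; rewrite (negbTE vu) /= => /andP []. Qed.

Lemma open_leaf_unfold G f p v u j : open_leaf u j (unfold G f p v) ->
  [/\ j = label G u, u \in p & prefix_ge G u (v :: take (index u p) p)].
Proof.
elim: f p v => [|f IH] p v /=; case: (vertex_at G v) => // r; case: ifP => //=.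
- by move=> /andP [vp ge] [<- ->]; rewrite /prefix_ge /= leqnn.
- by move=> _ [_ []].
- by move=> /andP [vp ge] [<- ->]; rewrite /prefix_ge /= leqnn.
move=> _ [/eqP vu /open_leaf_apply_rule [c /IH [-> uvp /andP [_ ge]]]].
move: uvp ge; rewrite inE eq_sym (negbTE vu) /= (negbTE vu) /= => up ge.
by split.
Qed.

Section Thread.

Variables (G : graph) (u : nat).
Hypothesis G_ok : graph_ok G.

Lemma open_leaf_unfold_prefix f p v :
  (exists j, open_leaf u j (unfold G f p v)) -> (label G u).1 <= (concl (unfold G f p v)).1.
Proof. by case=> j /open_leaf_unfold [_ _ /andP [ge _]]; rewrite concl_unfold. Qed.

Lemma thread_ok_unfold_rule f p v r : vertex_at G v = VRule r ->
  (forall c, thread_ok u (label G u).1 (unfold G f (v :: p) c)) ->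
  thread_ok u (label G u).1 (apply_rule r (unfold G f (v :: p))).
Proof.
move=> at_v; apply: thread_ok_apply_rule.
have rok : rule_ok G r by have := G_ok v; rewrite at_v.
have [-> _] := apply_rule_concl (concl_unfold G f (v :: p)) rok.
case=> j /open_leaf_apply_rule [c /open_leaf_unfold [_ _ /andP [_ ge]]].
by have := prefix_ge_take_index ge; rewrite /label at_v.
Qed.

Lemma thread_ok_unfold f p v : thread_ok u (label G u).1 (unfold G f p v).
Proof.
elim: f p v => [|f IH] p v.
  have := open_leaf_unfold_prefix (f:=0) (p:=p) (v:=v); rewrite /=.
  case: (vertex_at G v) => [n|r] top; first by split.
  by move: top; case: ifP => _ top; split=> // _; split=> // -[j []].
have := open_leaf_unfold_prefix (f:=f.+1) (p:=p) (v:=v); rewrite /=.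
case at_v: (vertex_at G v) => [n|r] top; first by split.
move: top; case: ifP => _ top; split=> // _.
by apply: thread_ok_unfold_rule at_v _.
Qed.

End Thread.

Fixpoint cycle_free (G : graph) (p : seq nat) : bool :=
  if p is v :: q then ~~ closes_cycle G q v && cycle_free G q else true.

Lemma closes_cycle_cat G p q v : closes_cycle G p v -> closes_cycle G (p ++ q) v.
Proof.
case/andP=> vp ge; rewrite /closes_cycle mem_cat vp index_cat vp.
by rewrite takel_cat ?index_size.
Qed.

Lemma cycle_free_cat G p q : cycle_free G (p ++ q) -> cycle_free G p && cycle_free G q.
Proof.
elim: p => //= v p IH /andP [open_v /IH /andP [-> ->]]; rewrite !andbT.
by apply: contra open_v; apply: closes_cycle_cat.
Qed.

Lemma cycle_free_size G S p : uniq S -> cycle_free G p -> {subset p <= S} ->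
  size p < 2 ^ size S.
Proof.
move sizeS: (size S) => n; elim: n S p sizeS => [|n IH] S p sizeS uniqS p_free pS.
  by case: p pS p_free => // v p /(_ v (mem_head _ _)); rewrite (size0nil sizeS).
case: (eqVneq p [::]) => [-> | p_nil]; first by rewrite expn_gt0.
have p_prefix : exists k, has (fun w => (label G w).1 == k) p.
  by case: p p_nil {p_free pS} => // w p _; exists (label G w).1; rewrite /= eqxx.
have [m /hasP [v vp /eqP mv] m_min] := find_ex_minn p_prefix.
have v_min w : w \in p -> (label G v).1 <= (label G w).1.
  by move=> wp; rewrite mv; apply: m_min; apply/hasP; exists w.
set a := take (index v p) p; set b := drop (index v p).+1 p.
have pE : p = a ++ v :: b by rewrite -drop_index // cat_take_drop.
have vNa : v \notin a by rewrite -has_pred1 has_take ?has_pred1 // ltnn.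
move: p_free; rewrite pE => /cycle_free_cat /and3P [a_free vNcloses b_free].
have vNb : v \notin b.
  apply: contra vNcloses => vb; rewrite /closes_cycle vb.
  by apply/allP=> w /mem_take wb; apply: v_min; rewrite pE mem_cat inE wb !orbT.
have sub_rem (q : seq nat) : v \notin q -> {subset q <= p} -> {subset q <= rem v S}.
  move=> vNq qp w wq; rewrite (mem_rem_uniq _ uniqS) inE pS ?qp // andbT.
  by apply: contraNneq vNq => <-.
have size_rem : size (rem v S) = n by rewrite size_rem ?pS // sizeS.
have a_p : {subset a <= p} by move=> w wa; rewrite pE mem_cat wa.
have b_p : {subset b <= p} by move=> w wb; rewrite pE mem_cat inE wb !orbT.
have := IH _ a size_rem (rem_uniq _ uniqS) a_free (sub_rem a vNa a_p).
have := IH _ b size_rem (rem_uniq _ uniqS) b_free (sub_rem b vNb b_p).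
rewrite size_cat /= expnS; lia.
Qed.

Lemma valid_unfold G f p v : graph_ok G -> cycle_free G p ->
  {subset p <= iota 0 (size G)} -> 2 ^ size G <= f + size p -> valid true (unfold G f p v).
Proof.
move=> G_ok; elim: f p v => [|f IH] p v p_free pG fuel /=;
  case at_v: (vertex_at G v) => [n|r]; try by split=> //; constructor.
all: case: ifP => closes; first by split=> //; apply: wsc_label.
  have := cycle_free_size (iota_uniq 0 (size G)) p_free pG; rewrite size_iota; lia.
have vG : v < size G.
  by rewrite ltnNge; apply/negP => /(nth_default (VAxiom 0)); rewrite -/(vertex_at G v) at_v.
have rok : rule_ok G r by have := G_ok v; rewrite at_v.
have label_v : label G v = rule_concl r by rewrite /label at_v.
have sub_valid c : valid true (unfold G f (v :: p) c).
  apply: IH; first by rewrite /= closes p_free.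
    by move=> w; rewrite inE => /predU1P [->|/pG //]; rewrite mem_iota.
  by rewrite /= addnS.
split; first exact: wsc_label.
split; first exact: (valid_apply_rule (concl_unfold G f (v :: p)) rok sub_valid).
split; first by case: r {at_v rok label_v}.
split; first by rewrite label_v; exact: (apply_rule_concl (concl_unfold G f (v :: p)) rok).
split; first by move=> j /open_leaf_apply_rule [c /open_leaf_unfold [-> _ _]]; exact: jeq_refl.
move=> _; apply: thread_ok_unfold_rule at_v _ => // c; exact: thread_ok_unfold.
Qed.

Lemma derivable_Reg_plus0_of_Reg_plus j : derivable_Reg_plus j -> derivable_Reg_plus0 j.
Proof.
case=> d [d_valid [d_closed dj]].
set G := (flatten d (fun _ => 0) 0).1; set root := (flatten d (fun _ => 0) 0).2.
have [root_label G_placed_ok] :=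
  flatten_correct (G := G) d_valid (fun i _ => erefl) (fun u j' h => False_ind _ (d_closed u j' h)).
have G_ok : graph_ok G.
  move=> v; case: (ltnP v (size G)) => [/G_placed_ok //|vG].
  by rewrite /vertex_at nth_default.
exists (unfold G (2 ^ size G) [::] root); split; last split.
- by apply: valid_unfold; rewrite ?addn0.
- by move=> u j' /open_leaf_unfold [].
- by rewrite concl_unfold; apply: jeq_trans root_label dj.
Qed.

Theorem mainTheorem3 (M : term) :
  derivable_Reg_plus (0, M) <-> derivable_Reg_plus0 (0, M).
Proof.
by split; [apply: derivable_Reg_plus0_of_Reg_plus | apply: derivable_Reg_plus_of_Reg_plus0].
Qed.
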